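(* Let $n\ge 2$ be an integer, $k,c_b>0$, $\rho_0>0$, and let $\lambda_{1,0}\le\cdots\le\lambda_{n,0}$ be real numbers. Consider the system $$\lambda_i'=-\lambda_i^2+\frac{k}{n}(\rho-c_b)\ (i=1,\dots,n),\qquad \rho'=-\rho\lambda,\quad \lambda=\sum_{i=1}^n\lambda_i,\qquad \rho(0)=\rho_0,\ \lambda_i(0)=\lambda_{i,0},$$ suppose its maximal interval of existence is $[0,t_B)$ with $0<t_B<\infty$, and let $u_i(t)=e^{\int_0^t\lambda_i(s)\,ds}$. Let $1\le J_1\le J_2\le n$ be integers such that $\lim_{t\to t_B^-}\lambda_i(t)=-\infty$ for $1\le i\le J_1$ and $\lim_{t\to t_B^-}\lambda_i(t)=+\infty$ for $J_2<i\le n$. Then $\lambda_{i,0}=\lambda_{j,0}$ and $\lambda_i(t)=\lambda_j(t)$ for all $t$ whenever $1\le i,j\le J_1$; $\lim_{t\to t_B^-}\lambda_i(t)/\lambda_j(t)=1$ whenever $J_2<i,j\le n$; and $$\lim_{t\to t_B^-}\frac{u_j(t)}{u_n(t)}=\frac{\lambda_{j,0}-\lambda_{1,0}}{\lambda_{n,0}-\lambda_{1,0}}\qquad\text{for } J_2<j<n.$$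
   Context: Solutions are real-valued and continuously differentiable on $[0,t_B)$. *)

From Stdlib Require Import Reals.
From Coquelicot Require Import Coquelicot.
Open Scope R_scope.

(* (lam, rho) solves the IVP on [0,T):
   lam' i = - lam_i^2 + k/n (rho - cb),  rho' = - rho * sum_{i=1}^n lam_i,
   rho(0) = rho0, lam_i(0) = lam0 i  (indices i = 1..n).
   Differentiability is required on the open interval (0,T) and
   right-continuity at 0 (one-sided C^1 on [0,T); the derivative is then
   automatically continuous since the right-hand side is). *)
Definition lam_sum (n : nat) (lam : nat -> R -> R) (t : R) : R :=
  sum_f 1 n (fun i => lam i t).

Definition IsSol (n : nat) (k cb rho0 : R) (lam0 : nat -> R) (T : R)
    (lam : nat -> R -> R) (rho : R -> R) : Prop :=
  rho 0 = rho0 /\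
  filterlim rho (at_right 0) (locally rho0) /\
  (forall i, (1 <= i <= n)%nat ->
     lam i 0 = lam0 i /\ filterlim (lam i) (at_right 0) (locally (lam0 i))) /\
  (forall t, 0 < t < T ->
     is_derive rho t (- rho t * lam_sum n lam t) /\
     forall i, (1 <= i <= n)%nat ->
       is_derive (lam i) t (- (lam i t)^2 + k / INR n * (rho t - cb))).

Definition MaxSol (n : nat) (k cb rho0 : R) (lam0 : nat -> R) (tB : R)
    (lam : nat -> R -> R) (rho : R -> R) : Prop :=
  IsSol n k cb rho0 lam0 tB lam rho /\
  forall T, tB < T -> ~ exists lam' rho', IsSol n k cb rho0 lam0 T lam' rho'.

Definition u (lam : nat -> R -> R) (i : nat) (t : R) : R :=
  exp (RInt (lam i) 0 t).

(* For two solutions l_i, l_j of the same Riccati equation l' = -l^2 + q, with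
   u = exp (int_0^t l), the quantity (l_i - l_j) u_i u_j is constant, since
   (l_i - l_j)' = -(l_i - l_j)(l_i + l_j) and (u_i u_j)' = (l_i + l_j) u_i u_j.
   The density stays positive (rho exp (int_0^t lambda) is constant), so q is
   bounded below by -k c_b / n; hence (l u)' = q u keeps -l u bounded where
   l < 0, so u = O(1/|l|) -> 0 when l -> -oo and two solutions tending to -oo
   must have equal constants, i.e. coincide.  Where l -> +oo, u is nondecreasing
   and bounded away from 0, so l_i - l_j stays bounded and l_i / l_j -> 1.
   Finally u_j / u_n is the ratio of the constants for (j, 1) and (n, 1) times
   (l_n - l_1) / (l_j - l_1), which tends to 1. *)

From Stdlib Require Import Reals Lra Lia.
From Coquelicot Require Import Coquelicot.
Open Scope R_scope.

Lemma at_left_interval (T : R) (P : R -> Prop) :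
  at_left T P <-> exists s, s < T /\ forall t, s <= t < T -> P t.
Proof.
  split.
  - intros [[e He] HP]. exists (T - e / 2). split; [lra|].
    intros t Ht. apply HP; [|lra].
    change (Rabs (t - T) < e). apply Rabs_lt_between. lra.
  - intros [s [Hs HP]]. assert (Hd : 0 < T - s) by lra.
    exists (mkposreal _ Hd). intros t Hb Ht. apply HP.
    change (Rabs (t - T) < T - s) in Hb. apply Rabs_lt_between in Hb. simpl in Hb. lra.
Qed.

Lemma at_left_Ioo (a T : R) : a < T -> at_left T (fun t => a < t < T).
Proof.
  intros H. apply at_left_interval. exists ((a + T) / 2). split; intros; lra.
Qed.

Lemma filterlim_p_infty_gt {X : Type} {F : (X -> Prop) -> Prop} {FF : Filter F}
    (f : X -> R) (M : R) :
  filterlim f F (Rbar_locally p_infty) -> F (fun t => M < f t).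
Proof. intros H. apply (H (fun y => M < y)). exists M. auto. Qed.

Lemma filterlim_m_infty_lt {X : Type} {F : (X -> Prop) -> Prop} {FF : Filter F}
    (f : X -> R) (M : R) :
  filterlim f F (Rbar_locally m_infty) -> F (fun t => f t < M).
Proof. intros H. apply (H (fun y => y < M)). exists M. auto. Qed.

Lemma filterlim_div_of_bounded_sub {X : Type} {F : (X -> Prop) -> Prop} {FF : Filter F}
    (f g : X -> R) (M : R) :
  F (fun t => Rabs (f t - g t) <= M) -> filterlim g F (Rbar_locally p_infty) ->
  filterlim (fun t => f t / g t) F (locally 1).
Proof.
  intros HM Hg. apply filterlim_locally. intros [e He].
  generalize (filter_and _ _ HM (filter_and _ _ (filterlim_p_infty_gt g 0 Hg)
                                   (filterlim_p_infty_gt g (M / e) Hg))).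
  apply filter_imp. intros t [Hfg [Hg0 HgM]]. change (Rabs (f t / g t - 1) < e).
  replace (f t / g t - 1) with ((f t - g t) / g t) by (field; lra).
  unfold Rdiv. rewrite Rabs_mult, Rabs_inv, (Rabs_pos_eq (g t)) by lra.
  apply Rlt_div_l; [lra|]. apply Rlt_div_l in HgM; lra.
Qed.

Definition extend_left (f : R -> R) (x : R) : R := f (Rmax x 0).

Lemma extend_left_nonneg (f : R -> R) (x : R) : 0 <= x -> extend_left f x = f x.
Proof. intros H. unfold extend_left. now rewrite Rmax_left. Qed.

Lemma extend_left_locally (f : R -> R) (x : R) :
  0 < x -> locally x (fun y => f y = extend_left f y).
Proof.
  intros H. apply (locally_open (fun y => 0 < y)); [apply open_gt| |exact H].
  intros y Hy. symmetry. apply extend_left_nonneg. lra.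
Qed.

(* Continuity on [0, T): the extension of f by the constant f 0 to the left of 0
   is continuous on (-oo, T). *)
Definition continuous_Ico0 (T : R) (f : R -> R) : Prop :=
  forall x, x < T -> continuous (extend_left f) x.

Lemma continuous_Ico0_intro (T : R) (f : R -> R) :
  filterlim f (at_right 0) (locally (f 0)) ->
  (forall x, 0 < x < T -> continuous f x) -> continuous_Ico0 T f.
Proof.
  intros H0 Hc x Hx. destruct (Rtotal_order x 0) as [Hneg | [-> | Hpos]].
  - apply continuous_ext_loc with (fun _ => f 0); [|apply continuous_const].
    apply (locally_open (fun y => y < 0)); [apply open_lt| |exact Hneg].
    intros y Hy. unfold extend_left. now rewrite Rmax_right by lra.
  - apply filterlim_locally. intros e.
    destruct (proj1 (filterlim_locally _ _) H0 e) as [d Hd].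
    exists d. intros y Hy. unfold extend_left. rewrite (Rmax_right 0 0) by lra.
    destruct (Rlt_or_le 0 y) as [Hy0 | Hy0].
    + rewrite Rmax_left by lra. now apply Hd.
    + rewrite Rmax_right by lra. apply ball_center.
  - apply continuous_ext_loc with f; [now apply extend_left_locally | apply Hc; lra].
Qed.

Lemma continuous_Ico0_minus (T : R) (f g : R -> R) :
  continuous_Ico0 T f -> continuous_Ico0 T g -> continuous_Ico0 T (fun t => f t - g t).
Proof.
  intros Hf Hg x Hx. apply (continuous_minus (extend_left f) (extend_left g)); auto.
Qed.

Lemma continuous_Ico0_mult (T : R) (f g : R -> R) :
  continuous_Ico0 T f -> continuous_Ico0 T g -> continuous_Ico0 T (fun t => f t * g t).
Proof.
  intros Hf Hg x Hx. apply (continuous_mult (extend_left f) (extend_left g)); auto.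
Qed.

Lemma continuous_sum_f_R0 (f : nat -> R -> R) (N : nat) (x : R) :
  (forall i, (i <= N)%nat -> continuous (f i) x) ->
  continuous (fun t => sum_f_R0 (fun i => f i t) N) x.
Proof.
  induction N as [|N IH]; intros Hf; simpl.
  - apply Hf. lia.
  - apply (continuous_plus (fun t => sum_f_R0 (fun i => f i t) N) (f (S N))).
    + apply IH. intros i Hi. apply Hf. lia.
    + apply Hf. lia.
Qed.

Lemma constant_of_derive_0 (T : R) (f : R -> R) :
  continuous_Ico0 T f -> (forall x, 0 < x < T -> is_derive f x 0) ->
  forall t, 0 <= t < T -> f t = f 0.
Proof.
  intros Hc Hd t Ht.
  rewrite <- (extend_left_nonneg f t), <- (extend_left_nonneg f 0) by lra.
  destruct (MVT_gen (extend_left f) 0 t (fun _ => 0)) as [c [_ Hmvt]].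
  - intros x Hx. rewrite Rmin_left, Rmax_right in Hx by lra.
    apply is_derive_ext_loc with f; [apply extend_left_locally; lra | apply Hd; lra].
  - intros x Hx. rewrite Rmin_left, Rmax_right in Hx by lra.
    apply continuity_pt_filterlim, Hc. lra.
  - lra.
Qed.

Lemma le_of_derive_nonneg (f df : R -> R) (s t : R) : s <= t ->
  (forall x, s <= x <= t -> is_derive f x (df x)) ->
  (forall x, s <= x <= t -> 0 <= df x) -> f s <= f t.
Proof.
  intros Hst Hd Hpos.
  destruct (MVT_gen f s t df) as [c [Hc Hmvt]].
  - intros x Hx. rewrite Rmin_left, Rmax_right in Hx by lra. apply Hd. lra.
  - intros x Hx. rewrite Rmin_left, Rmax_right in Hx by lra.
    apply continuity_pt_filterlim, (ex_derive_continuous (K := R_AbsRing) (V := R_NormedModule)).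
    exists (df x). now apply Hd.
  - rewrite Rmin_left, Rmax_right in Hc by lra.
    assert (0 <= df c * (t - s)) by (apply Rmult_le_pos; [apply Hpos|]; lra).
    lra.
Qed.

Lemma is_derive_RInt_extend_left (T : R) (f : R -> R) (x : R) :
  continuous_Ico0 T f -> 0 < T -> x < T ->
  is_derive (fun t => RInt (extend_left f) 0 t) x (extend_left f x).
Proof.
  intros Hf HT Hx. apply is_derive_RInt with 0; [|now apply Hf].
  apply (locally_open (fun b => b < T)); [apply open_lt| |exact Hx].
  intros b Hb. apply RInt_correct, ex_RInt_continuous. intros z Hz. apply Hf.
  apply Rle_lt_trans with (Rmax 0 b); [apply Hz | apply Rmax_lub_lt; lra].
Qed.

Lemma RInt_extend_left (f : R -> R) (t : R) :
  0 <= t -> RInt (extend_left f) 0 t = RInt f 0 t.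
Proof.
  intros Ht. apply RInt_ext. intros x Hx. rewrite Rmin_left in Hx by lra.
  apply extend_left_nonneg. lra.
Qed.

(* Reduces [is_derive f x l] to [is_derive f x ?d] and [?d = l]. *)
Ltac derive_then_eq :=
  match goal with |- is_derive ?f ?x _ => eapply (eq_ind _ (is_derive f x)) end.

(* [u lam i] is convertible to [expint (lam i)]. *)
Definition expint (l : R -> R) (t : R) : R := exp (RInt l 0 t).

Lemma expint_0 (l : R -> R) : expint l 0 = 1.
Proof. unfold expint. rewrite RInt_point. apply exp_0. Qed.

Lemma expint_pos (l : R -> R) (t : R) : 0 < expint l t.
Proof. apply exp_pos. Qed.

Lemma is_derive_expint (T : R) (l : R -> R) (x : R) :
  continuous_Ico0 T l -> 0 < x < T -> is_derive (expint l) x (l x * expint l x).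
Proof.
  intros Hl Hx.
  apply is_derive_ext_loc with (fun t => exp (RInt (extend_left l) 0 t)).
  - apply (locally_open (fun y => 0 < y)); [apply open_gt| |lra].
    intros y Hy. unfold expint. now rewrite RInt_extend_left by lra.
  - derive_then_eq.
    + apply (is_derive_comp exp (fun t => RInt (extend_left l) 0 t)).
      * apply is_derive_exp.
      * apply is_derive_RInt_extend_left with T; [exact Hl | lra | lra].
    + unfold expint. rewrite RInt_extend_left, extend_left_nonneg by lra. simpl.
      unfold scal; simpl; unfold mult; simpl. ring.
Qed.

Lemma continuous_Ico0_expint (T : R) (l : R -> R) :
  0 < T -> continuous_Ico0 T l -> continuous_Ico0 T (expint l).
Proof.
  intros HT Hl. apply continuous_Ico0_intro.
  - apply filterlim_within_ext with (fun t => exp (RInt (extend_left l) 0 t)).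
    { intros t Ht. unfold expint. now rewrite RInt_extend_left by lra. }
    apply (filterlim_filter_le_1 (F := locally 0)); [apply filter_le_within|].
    rewrite expint_0.
    replace 1 with (exp (RInt (extend_left l) 0 0)) by (rewrite RInt_point; apply exp_0).
    change (continuous (fun t => exp (RInt (extend_left l) 0 t)) 0).
    apply (ex_derive_continuous (K := R_AbsRing) (V := R_NormedModule)). eexists.
    apply (is_derive_comp exp); [apply is_derive_exp | now apply is_derive_RInt_extend_left with T].
  - intros x Hx. apply (ex_derive_continuous (K := R_AbsRing) (V := R_NormedModule)).
    eexists. now apply is_derive_expint with T.
Qed.

Lemma expint_ge_of_pos (T : R) (l : R -> R) :
  0 < T -> continuous_Ico0 T l -> at_left T (fun t => 0 < l t) ->
  exists c, 0 < c /\ at_left T (fun t => c <= expint l t).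
Proof.
  intros HT Hl Hpos.
  destruct (proj1 (at_left_interval T _) (filter_and _ _ (at_left_Ioo 0 T HT) Hpos))
    as [s [Hs Hsl]].
  exists (expint l s). split; [apply expint_pos|].
  apply at_left_interval. exists s. split; [exact Hs|]. intros t Ht.
  apply le_of_derive_nonneg with (df := fun x => l x * expint l x); [lra| |].
  - intros x Hx. apply is_derive_expint with T; [exact Hl|]. specialize (Hsl x). lra.
  - intros x Hx. apply Rmult_le_pos; [|left; apply expint_pos].
    specialize (Hsl x). lra.
Qed.

Lemma linear_ode_integrating_factor (T : R) (g f : R -> R) :
  0 < T -> continuous_Ico0 T g -> filterlim f (at_right 0) (locally (f 0)) ->
  (forall t, 0 < t < T -> is_derive f t (- f t * g t)) ->
  forall t, 0 <= t < T -> f t * expint g t = f 0.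
Proof.
  intros HT Hg Hf0 Hf t Ht.
  rewrite (constant_of_derive_0 T (fun t => f t * expint g t));
    [now rewrite expint_0, Rmult_1_r | | |exact Ht].
  - apply continuous_Ico0_mult; [|now apply continuous_Ico0_expint].
    apply continuous_Ico0_intro; [exact Hf0|]. intros x Hx.
    apply (ex_derive_continuous (K := R_AbsRing) (V := R_NormedModule)). eexists. now apply Hf.
  - intros x Hx. derive_then_eq.
    + apply (is_derive_mult f (expint g));
        [now apply Hf | now apply is_derive_expint with T | exact Rmult_comm].
    + simpl. unfold plus, mult; simpl. ring.
Qed.

Definition riccati_sol (q : R -> R) (T : R) (l : R -> R) : Prop :=
  filterlim l (at_right 0) (locally (l 0)) /\
  forall t, 0 < t < T -> is_derive l t (- l t ^ 2 + q t).

Section Riccati.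

Variables (q : R -> R) (T : R).
Hypothesis T_gt0 : 0 < T.

Lemma riccati_continuous (l : R -> R) : riccati_sol q T l -> continuous_Ico0 T l.
Proof.
  intros [Hl0 Hl]. apply continuous_Ico0_intro; [exact Hl0|]. intros x Hx.
  apply (ex_derive_continuous (K := R_AbsRing) (V := R_NormedModule)). eexists. now apply Hl.
Qed.

Lemma riccati_wronskian (li lj : R -> R) :
  riccati_sol q T li -> riccati_sol q T lj ->
  forall t, 0 <= t < T -> (li t - lj t) * (expint li t * expint lj t) = li 0 - lj 0.
Proof.
  intros Hi Hj t Ht.
  pose proof (riccati_continuous li Hi) as Ci. pose proof (riccati_continuous lj Hj) as Cj.
  rewrite (constant_of_derive_0 T (fun t => (li t - lj t) * (expint li t * expint lj t)));
    [rewrite !expint_0; ring | | |exact Ht].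
  - apply continuous_Ico0_mult; [now apply continuous_Ico0_minus|].
    apply continuous_Ico0_mult; now apply continuous_Ico0_expint.
  - intros x Hx. derive_then_eq.
    + apply (is_derive_mult (fun t => li t - lj t) (fun t => expint li t * expint lj t));
        [|apply (is_derive_mult (expint li) (expint lj)) | exact Rmult_comm].
      * apply (is_derive_minus li lj); [apply Hi | apply Hj]; exact Hx.
      * now apply is_derive_expint with T.
      * now apply is_derive_expint with T.
      * exact Rmult_comm.
    + simpl. unfold plus, mult, minus, opp; simpl. unfold plus, opp; simpl. ring.
Qed.

Lemma riccati_blowup_sub_bounded (li lj : R -> R) :
  riccati_sol q T li -> riccati_sol q T lj ->
  at_left T (fun t => 0 < li t) -> at_left T (fun t => 0 < lj t) ->
  exists M, at_left T (fun t => Rabs (li t - lj t) <= M).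
Proof.
  intros Hi Hj Pi Pj.
  destruct (expint_ge_of_pos T li T_gt0 (riccati_continuous li Hi) Pi) as [ci [Hci Ei]].
  destruct (expint_ge_of_pos T lj T_gt0 (riccati_continuous lj Hj) Pj) as [cj [Hcj Ej]].
  exists (Rabs (li 0 - lj 0) / (ci * cj)).
  generalize (filter_and _ _ (at_left_Ioo 0 T T_gt0) (filter_and _ _ Ei Ej)).
  apply filter_imp. intros t [Ht [Hit Hjt]].
  rewrite <- (riccati_wronskian li lj Hi Hj t) by lra.
  rewrite Rabs_mult, (Rabs_pos_eq (expint li t * expint lj t))
    by (left; apply Rmult_lt_0_compat; apply expint_pos).
  apply Rle_div_r; [apply Rmult_lt_0_compat; lra|]. apply Rmult_le_compat_l; [apply Rabs_pos|].
  apply Rmult_le_compat; lra.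
Qed.

Lemma riccati_blowup_ratio (li lj : R -> R) :
  riccati_sol q T li -> riccati_sol q T lj ->
  filterlim li (at_left T) (Rbar_locally p_infty) ->
  filterlim lj (at_left T) (Rbar_locally p_infty) ->
  filterlim (fun t => li t / lj t) (at_left T) (locally 1).
Proof.
  intros Hi Hj Li Lj.
  destruct (riccati_blowup_sub_bounded li lj Hi Hj (filterlim_p_infty_gt li 0 Li)
              (filterlim_p_infty_gt lj 0 Lj)) as [M HM].
  exact (filterlim_div_of_bounded_sub li lj M HM Lj).
Qed.

Lemma riccati_expint_ratio (l1 lj ln : R -> R) :
  riccati_sol q T l1 -> riccati_sol q T lj -> riccati_sol q T ln ->
  at_left T (fun t => l1 t < 0) ->
  filterlim lj (at_left T) (Rbar_locally p_infty) ->
  filterlim ln (at_left T) (Rbar_locally p_infty) ->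
  filterlim (fun t => expint lj t / expint ln t) (at_left T)
    (locally ((lj 0 - l1 0) / (ln 0 - l1 0))).
Proof.
  intros H1 Hj Hn N1 Lj Ln.
  set (c := (lj 0 - l1 0) / (ln 0 - l1 0)).
  destruct (riccati_blowup_sub_bounded ln lj Hn Hj (filterlim_p_infty_gt ln 0 Ln)
              (filterlim_p_infty_gt lj 0 Lj)) as [M HM].
  apply filterlim_ext_loc with (fun t => c * ((ln t - l1 t) / (lj t - l1 t))).
  - generalize (filter_and _ _ (at_left_Ioo 0 T T_gt0) (filter_and _ _ N1
      (filter_and _ _ (filterlim_p_infty_gt lj 0 Lj) (filterlim_p_infty_gt ln 0 Ln)))).
    apply filter_imp. intros t [Ht [H1t [Hjt Hnt]]].
    pose proof (expint_pos lj t). pose proof (expint_pos ln t). pose proof (expint_pos l1 t).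
    unfold c. rewrite <- (riccati_wronskian lj l1 Hj H1 t), <- (riccati_wronskian ln l1 Hn H1 t)
      by lra.
    field. repeat split; lra.
  - apply filterlim_comp with (locally 1).
    2: { replace (locally c) with (locally (scal c 1)) by (f_equal; apply Rmult_1_r).
         apply (filterlim_scal_r (V := R_NormedModule)). }
    apply filterlim_div_of_bounded_sub with M.
    + generalize HM. apply filter_imp. intros t Ht.
      replace (ln t - l1 t - (lj t - l1 t)) with (ln t - lj t) by ring. exact Ht.
    + apply filterlim_ge_p_infty with lj; [|exact Lj].
      generalize N1. apply filter_imp. intros t Ht. lra.
Qed.

Variable a : R.
Hypothesis a_ge0 : 0 <= a.
Hypothesis q_ge : forall t, 0 < t < T -> - a <= q t.

Lemma riccati_neg_bound (l : R -> R) :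
  riccati_sol q T l -> at_left T (fun t => l t < 0) ->
  exists B, 0 < B /\ at_left T (fun t => - l t * expint l t <= B).
Proof.
  intros Hl Hneg. pose proof (riccati_continuous l Hl) as Cl.
  destruct (proj1 (at_left_interval T _) (filter_and _ _ (at_left_Ioo 0 T T_gt0) Hneg))
    as [s [Hs Hsl]].
  assert (Hsl' : forall x t, s <= x <= t -> t < T -> 0 < x < T /\ l x < 0)
    by (intros x t Hx Ht; apply Hsl; lra).
  set (U := expint l s).
  assert (HU : forall t, s <= t < T -> expint l t <= U).
  { intros t Ht. enough (- U <= - expint l t) by lra.
    apply (le_of_derive_nonneg (fun x => - expint l x) (fun x => - (l x * expint l x)));
      [lra| |].
    - intros x Hx. apply (is_derive_opp (expint l)), is_derive_expint with T; [exact Cl|].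
      apply (Hsl' x t); lra.
    - intros x Hx. pose proof (expint_pos l x). destruct (Hsl' x t); [lra..|]. nra. }
  (* (l u)' = q u >= - a u >= - a U on [s, T), so l u + a U t is nondecreasing there. *)
  set (h := fun x => l x * expint l x + a * U * x).
  assert (Hh : forall t, s <= t < T -> h s <= h t).
  { intros t Ht.
    apply le_of_derive_nonneg with (df := fun x => q x * expint l x + a * U); [lra| |].
    - intros x Hx. destruct (Hsl' x t) as [Hx0 _]; [lra..|].
      derive_then_eq.
      + apply (is_derive_plus (fun x => l x * expint l x) (fun x => a * U * x)).
        * apply (is_derive_mult l (expint l));
            [now apply Hl | now apply is_derive_expint with T | exact Rmult_comm].
        * apply is_derive_scal, is_derive_id.
      + simpl. unfold plus, mult, one; simpl. ring.
    - intros x Hx. destruct (Hsl' x t) as [Hx0 _]; [lra..|].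
      pose proof (q_ge x Hx0). pose proof (HU x (conj (proj1 Hx) (proj2 Hx0))).
      pose proof (expint_pos l x). nra. }
  exists (Rmax 1 (a * U * T - h s)). split; [apply Rlt_le_trans with 1; [lra | apply Rmax_l]|].
  apply at_left_interval. exists s. split; [exact Hs|]. intros t Ht.
  apply Rle_trans with (a * U * T - h s); [|apply Rmax_r].
  pose proof (Hh t Ht). pose proof (expint_pos l s). unfold h in *.
  assert (a * U * t <= a * U * T)
    by (apply Rmult_le_compat_l; [apply Rmult_le_pos|]; unfold U; lra).
  lra.
Qed.

Lemma riccati_blowdown_start_le (li lj : R -> R) :
  riccati_sol q T li -> riccati_sol q T lj ->
  filterlim li (at_left T) (Rbar_locally m_infty) ->
  filterlim lj (at_left T) (Rbar_locally m_infty) ->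
  li 0 <= lj 0.
Proof.
  intros Hi Hj Li Lj. apply Rnot_lt_le. intros Hd.
  set (d := li 0 - lj 0). assert (Hd0 : 0 < d) by (unfold d; lra).
  destruct (riccati_neg_bound li Hi (filterlim_m_infty_lt li 0 Li)) as [Bi [HBi Ei]].
  destruct (riccati_neg_bound lj Hj (filterlim_m_infty_lt lj 0 Lj)) as [Bj [HBj Ej]].
  (* d = (li - lj) ui uj < (- lj uj) ui <= Bj ui <= Bj Bi / (- li), which tends to 0. *)
  destruct (filter_ex _ (filter_and _ _ (at_left_Ioo 0 T T_gt0)
              (filter_and _ _ (filterlim_m_infty_lt li (- (Bi * Bj / d)) Li)
                (filter_and _ _ Ei (filter_and _ _ Ej (filterlim_m_infty_lt lj 0 Lj))))))
    as [t [Ht [Hli [HEi [HEj Hlj]]]]].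
  pose proof (riccati_wronskian li lj Hi Hj t ltac:(lra)) as W. fold d in W.
  pose proof (expint_pos li t). pose proof (expint_pos lj t).
  set (ui := expint li t) in *. set (uj := expint lj t) in *.
  assert (Hli0 : li t < 0).
  { enough (0 < Bi * Bj / d) by lra. apply Rdiv_lt_0_compat; [nra | exact Hd0]. }
  assert (li t * (ui * uj) < 0) by (apply Rmult_neg_pos; nra).
  assert (- lj t * uj * ui <= Bj * ui) by (apply Rmult_le_compat_r; lra).
  assert (d < Bj * ui) by (rewrite <- W; nra).
  assert (Bi * Bj < - li t * d) by (apply Rlt_div_l; lra).
  assert (Bj * (- li t * ui) <= Bj * Bi) by (apply Rmult_le_compat_l; lra).
  nra.
Qed.

Lemma riccati_blowdown_eq (li lj : R -> R) :
  riccati_sol q T li -> riccati_sol q T lj ->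
  filterlim li (at_left T) (Rbar_locally m_infty) ->
  filterlim lj (at_left T) (Rbar_locally m_infty) ->
  li 0 = lj 0 /\ forall t, 0 <= t < T -> li t = lj t.
Proof.
  intros Hi Hj Li Lj.
  assert (E : li 0 = lj 0) by (apply Rle_antisym; apply riccati_blowdown_start_le; auto).
  split; [exact E|]. intros t Ht.
  pose proof (riccati_wronskian li lj Hi Hj t Ht) as W. rewrite E, Rminus_diag in W.
  pose proof (Rmult_lt_0_compat _ _ (expint_pos li t) (expint_pos lj t)).
  destruct (Rmult_integral _ _ W); lra.
Qed.

End Riccati.

Section Solution.

Context {n : nat} {k cb rho0 : R} {lam0 : nat -> R} {T : R}
  {lam : nat -> R -> R} {rho : R -> R}.
Hypothesis sol : IsSol n k cb rho0 lam0 T lam rho.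

Lemma IsSol_init (i : nat) : (1 <= i <= n)%nat -> lam i 0 = lam0 i.
Proof. intros Hi. destruct sol as [_ [_ [Hinit _]]]. now apply Hinit. Qed.

Lemma IsSol_riccati (i : nat) :
  (1 <= i <= n)%nat -> riccati_sol (fun t => k / INR n * (rho t - cb)) T (lam i).
Proof.
  intros Hi. destruct sol as [_ [_ [Hinit Hder]]]. split.
  - destruct (Hinit i Hi) as [-> Hlim]. exact Hlim.
  - intros t Ht. now apply Hder.
Qed.

(* The hypothesis [1 <= n] matters: [sum_f 1 0 f] is [f 1], not the empty sum. *)
Lemma IsSol_rho_pos : 0 < T -> (1 <= n)%nat -> 0 < rho0 -> forall t, 0 <= t < T -> 0 < rho t.
Proof.
  intros HT Hn Hrho0 t Ht. destruct sol as [Hrho_0 [Hrho_lim [_ Hder]]].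
  assert (Hsum : continuous_Ico0 T (lam_sum n lam)).
  { intros x Hx. apply (continuous_sum_f_R0 (fun i => extend_left (lam (i + 1)%nat))).
    intros i Hi. apply (riccati_continuous (fun t => k / INR n * (rho t - cb)) T);
      [apply IsSol_riccati; lia | exact Hx]. }
  pose proof (linear_ode_integrating_factor T (lam_sum n lam) rho HT Hsum) as E.
  rewrite Hrho_0 in E. specialize (E Hrho_lim (fun t Ht => proj1 (Hder t Ht)) t Ht).
  pose proof (expint_pos (lam_sum n lam) t). nra.
Qed.

End Solution.

Theorem lemma3p1 (n : nat) (k cb rho0 tB : R) (lam0 : nat -> R)
    (lam : nat -> R -> R) (rho : R -> R) (J1 J2 : nat) :
  (2 <= n)%nat -> 0 < k -> 0 < cb -> 0 < rho0 ->
  (forall i, (1 <= i)%nat -> (i < n)%nat -> lam0 i <= lam0 (S i)) ->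
  0 < tB ->
  MaxSol n k cb rho0 lam0 tB lam rho ->
  (1 <= J1)%nat -> (J1 <= J2)%nat -> (J2 <= n)%nat ->
  (forall i, (1 <= i <= J1)%nat ->
     filterlim (lam i) (at_left tB) (Rbar_locally m_infty)) ->
  (forall i, (J2 < i <= n)%nat ->
     filterlim (lam i) (at_left tB) (Rbar_locally p_infty)) ->
  (forall i j, (1 <= i <= J1)%nat -> (1 <= j <= J1)%nat ->
     lam0 i = lam0 j /\ forall t, 0 <= t < tB -> lam i t = lam j t) /\
  (forall i j, (J2 < i <= n)%nat -> (J2 < j <= n)%nat ->
     filterlim (fun t => lam i t / lam j t) (at_left tB) (locally 1)) /\
  (forall j, (J2 < j < n)%nat ->
     filterlim (fun t => u lam j t / u lam n t) (at_left tB)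
       (locally ((lam0 j - lam0 1%nat) / (lam0 n - lam0 1%nat)))).
Proof.
  intros Hn Hk Hcb Hrho0 _ HtB [Hsol _] HJ1 HJ12 HJ2 Hdown Hup.
  set (q := fun t => k / INR n * (rho t - cb)).
  assert (Hric : forall i, (1 <= i <= n)%nat -> riccati_sol q tB (lam i))
    by (intros i Hi; exact (IsSol_riccati Hsol i Hi)).
  assert (Hkn : 0 < k / INR n) by (apply Rdiv_lt_0_compat; [lra | apply lt_0_INR; lia]).
  assert (Hq : forall t, 0 < t < tB -> - (k / INR n * cb) <= q t).
  { intros t Ht. pose proof (IsSol_rho_pos Hsol HtB ltac:(lia) Hrho0 t ltac:(lra)).
    unfold q. nra. }
  split; [|split].
  - intros i j Hi Hj.
    rewrite <- (IsSol_init Hsol i), <- (IsSol_init Hsol j) by lia.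
    apply (riccati_blowdown_eq q tB HtB (k / INR n * cb)); [nra | exact Hq | ..];
      [apply Hric | apply Hric | apply Hdown | apply Hdown]; lia.
  - intros i j Hi Hj.
    apply (riccati_blowup_ratio q tB HtB); [apply Hric | apply Hric | apply Hup | apply Hup]; lia.
  - intros j Hj. rewrite <- !(IsSol_init Hsol) by lia.
    apply (riccati_expint_ratio q tB HtB); try (apply Hric; lia); try (apply Hup; lia).
    apply filterlim_m_infty_lt, Hdown. lia.
Qed.
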